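(* For every $n\ge 3$, $\chi'_{qm\Sigma}(K_n)=3$.
   Context: A $k$-edge-coloring of $G$ is any map $c:E(G)\to\{1,\dots,k\}$ (adjacent edges may share colors). It induces $\sigma_c(v)=\sum_{u\in N(v)}c(vu)$. The coloring is neighbor sum distinguishing (NSD) if $\sigma_c(u)\ne\sigma_c(v)$ for every edge $uv$. It is quasi-majority if every vertex $v$ is incident to at most $\lceil d(v)/2\rceil$ edges of each single color. $\chi'_{qm\Sigma}(G)$ denotes the least $k$ such that $G$ has a $k$-edge-coloring that is both quasi-majority and NSD. *)

From mathcomp Require Import all_boot.
Set Implicit Arguments. Unset Strict Implicit. Unset Printing Implicit Defensive.

Definition simple_graph (T : finType) (e : rel T) : Prop :=
  (forall u v, e u v = e v u) /\ (forall u, ~~ e u u).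

Definition Kn_adj (n : nat) : rel 'I_n := fun u v => u != v.

(* An edge-coloring with colours 1..k, represented as a symmetric function
   c u v giving the colour of the edge uv (values on non-edges irrelevant). *)
Definition is_k_edge_coloring (T : finType) (e : rel T) (k : nat)
    (c : T -> T -> nat) : Prop :=
  forall u v, e u v -> [/\ c u v = c v u, 1 <= c u v & c u v <= k].

Definition deg (T : finType) (e : rel T) (v : T) : nat := #|[set u | e v u]|.

Definition sigma (T : finType) (e : rel T) (c : T -> T -> nat) (v : T) : nat :=
  \sum_(u | e v u) c v u.

Definition nsd (T : finType) (e : rel T) (c : T -> T -> nat) : Prop :=
  forall u v, e u v -> sigma e c u <> sigma e c v.

Definition quasi_majority (T : finType) (e : rel T) (c : T -> T -> nat) : Prop :=
  forall (v : T) (col : nat),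
    #|[set u | e v u & c v u == col]| <= uphalf (deg e v).

Definition has_qm_nsd_coloring (T : finType) (e : rel T) (k : nat) : Prop :=
  exists c : T -> T -> nat,
    [/\ is_k_edge_coloring e k c, quasi_majority e c & nsd e c].

Definition chi_qm_sigma_eq (T : finType) (e : rel T) (k : nat) : Prop :=
  has_qm_nsd_coloring e k /\ (forall j, j < k -> ~ has_qm_nsd_coloring e j).

From mathcomp Require Import all_boot zify.

Set Implicit Arguments.
Unset Strict Implicit.
Unset Printing Implicit Defensive.

(* With colours 1 and 2 only, quasi-majority forces the number x of 2-edges at
   a vertex of degree d to lie between d - ⌈d/2⌉ and ⌈d/2⌉, so sigma = d + x
   takes at most two values on vertices of equal degree and cannot separate
   the three vertices of a triangle of K_n.
   With colours 1, 2, 3, sigma(v) = 2d + #3-edges - #1-edges.  For n = 2m+1 on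
   vertices 0..2m, colour uv by 2 if u+v is even and otherwise by 1 or 3
   according as u+v < 2m or not: then v has m - ⌊v/2⌋ edges of colour 1 and
   ⌈v/2⌉ of colour 3, whence sigma(v) = 3m + v.  For n = 2m+2 add a hub joined
   to v by colour 1, 2 or 3 according as v < m, v < m+2 or not; sigma stays
   strictly increasing on 0..2m and equals 4m+1 at the hub, a value it misses. *)

Definition color_count (T : finType) (e : rel T) (c : T -> T -> nat)
    (v : T) (i : nat) : nat :=
  #|[set u | e v u & c v u == i]|.

Lemma is_k_edge_coloring_leq (T : finType) (e : rel T) j k c :
  j <= k -> is_k_edge_coloring e j c -> is_k_edge_coloring e k c.
Proof.
by move=> jk cj u v euv; have [-> -> cuv] := cj u v euv; split; last exact: leq_trans jk.
Qed.

Section ColorCounts.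

Variables (T : finType) (e : rel T) (c : T -> T -> nat).

Lemma color_countE v i : color_count e c v i = \sum_(u | e v u) (c v u == i).
Proof. by rewrite /color_count -sum1dep_card big_mkcondr. Qed.

Lemma degE v : deg e v = \sum_(u | e v u) 1.
Proof. by rewrite /deg sum1dep_card. Qed.

Lemma color_count_eq0 k v i :
  is_k_edge_coloring e k c -> ~~ (0 < i <= k) -> color_count e c v i = 0.
Proof.
move=> c_col i_out; rewrite color_countE big1 // => u euv.
have [_ c_gt0 c_le] := c_col v u euv.
by apply/eqP; rewrite eqb0; apply: contra i_out => /eqP <-; apply/andP.
Qed.

Lemma deg_3_coloring v : is_k_edge_coloring e 3 c ->
  deg e v = color_count e c v 1 + color_count e c v 2 + color_count e c v 3.
Proof.
move=> c_col; rewrite degE !color_countE -!big_split /=; apply: eq_bigr => u euv.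
by have [_ c_gt0 c_le3] := c_col v u euv; lia.
Qed.

Lemma sigma_3_coloring v : is_k_edge_coloring e 3 c ->
  sigma e c v + color_count e c v 1 = (deg e v).*2 + color_count e c v 3.
Proof.
move=> c_col; rewrite /sigma degE !color_countE -!big_split -mul2n big_distrr -big_split /=.
by apply: eq_bigr => u euv; have [_ c_gt0 c_le3] := c_col v u euv; lia.
Qed.

Lemma deg_2_coloring v : is_k_edge_coloring e 2 c ->
  deg e v = color_count e c v 1 + color_count e c v 2.
Proof.
move=> c_col; have c_col3 := is_k_edge_coloring_leq (isT : 2 <= 3) c_col.
by rewrite (deg_3_coloring v c_col3) [color_count _ _ _ 3](color_count_eq0 _ c_col) ?addn0.
Qed.

Lemma sigma_2_coloring v : is_k_edge_coloring e 2 c ->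
  sigma e c v = deg e v + color_count e c v 2.
Proof.
move=> c_col; have := sigma_3_coloring v (is_k_edge_coloring_leq (isT : 2 <= 3) c_col).
by rewrite [color_count _ _ _ 3](color_count_eq0 _ c_col) // (deg_2_coloring v c_col); lia.
Qed.

End ColorCounts.

Lemma triangle_no_qm_nsd_2_coloring (T : finType) (e : rel T) k (x y z : T) :
  k <= 2 -> e x y -> e x z -> e y z -> deg e y = deg e x -> deg e z = deg e x ->
  ~ has_qm_nsd_coloring e k.
Proof.
move=> k2 exy exz eyz dy dz [c [/(is_k_edge_coloring_leq k2) c_col qm nsd]].
have sigma_bounds v : (deg e v).*2 <= sigma e c v + uphalf (deg e v) /\
                      sigma e c v <= deg e v + uphalf (deg e v).
  have q1 : color_count e c v 1 <= uphalf (deg e v) := qm v 1.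
  have q2 : color_count e c v 2 <= uphalf (deg e v) := qm v 2.
  by rewrite sigma_2_coloring //; have := deg_2_coloring v c_col; lia.
have := nsd _ _ exy; have := nsd _ _ exz; have := nsd _ _ eyz.
by have := sigma_bounds x; have := sigma_bounds y; have := sigma_bounds z; lia.
Qed.

Lemma deg_Kn n (v : 'I_n) : deg (@Kn_adj n) v = n.-1.
Proof.
rewrite /deg /Kn_adj (_ : [set u | v != u] = [set~ v]) ?cardsC1 ?card_ord //.
by apply/setP => u; rewrite !inE eq_sym.
Qed.

Lemma Kn_no_qm_nsd_2_coloring n k :
  3 <= n -> k <= 2 -> ~ has_qm_nsd_coloring (@Kn_adj n) k.
Proof.
move=> n_ge3 k2; have n0 : 0 < n by lia.
have n1 : 1 < n by lia.
have n2 : 2 < n by lia.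
apply: (@triangle_no_qm_nsd_2_coloring _ _ _ (Ordinal n0) (Ordinal n1) (Ordinal n2)) => //.
all: by rewrite !deg_Kn.
Qed.

Lemma sum_odd_addn t p : \sum_(0 <= u < t) odd (u + p) = (t + odd p)./2.
Proof.
elim: t => [|t IHt]; first by rewrite big_nil; case: (odd p).
by rewrite big_nat_recr //= IHt; lia.
Qed.

Lemma sum_nat_widen N t (P : pred nat) : t <= N ->
  \sum_(0 <= u < N) (P u && (u < t)) = \sum_(0 <= u < t) P u.
Proof.
move=> tN; rewrite (big_nat_widen _ _ _ _ _ tN) [RHS]big_mkcond /=.
by apply: eq_big_nat => u _; case: (u < t); rewrite ?andbT ?andbF.
Qed.

Lemma sum_nat_ltn N t : t <= N -> \sum_(0 <= u < N) (u < t) = t.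
Proof.
move=> tN; have /= := sum_nat_widen xpredT tN.
by rewrite sum_nat_const_nat muln1 subn0.
Qed.

Lemma sum_nat_geq N t : t <= N -> \sum_(0 <= u < N) (t <= u) = N - t.
Proof.
move=> tN; apply/eqP; rewrite -(eqn_add2l t) -{1}(sum_nat_ltn tN) -big_split /=.
by rewrite (eq_big_nat _ _ (F2 := fun=> 1)) ?sum_nat_const_nat => [|u _]; [lia | case: ltnP].
Qed.

Definition nbr_count n (c : nat -> nat -> nat) (v i : nat) : nat :=
  \sum_(0 <= u < n) ((u != v) && (c v u == i)).

Lemma color_count_Kn n (c : nat -> nat -> nat) (v : 'I_n) i :
  color_count (@Kn_adj n) (fun x y : 'I_n => c x y) v i = nbr_count n c v i.
Proof.
rewrite color_countE /nbr_count big_mkcond big_mkord /=; apply: eq_bigr => u _.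
by rewrite /Kn_adj eq_sym; case: (_ != _).
Qed.

(* The third bound is quasi-majority for colour 2, which has n-1 - #1 - #3
   edges at v; the last hypothesis is NSD, via [sigma_3_coloring]. *)
Lemma Kn_has_qm_nsd_3_coloring_from_counts n (c : nat -> nat -> nat) :
  (forall u v, c u v = c v u) -> (forall u v, 1 <= c u v <= 3) ->
  (forall v, v < n ->
     [/\ nbr_count n c v 1 <= uphalf n.-1, nbr_count n c v 3 <= uphalf n.-1
       & n.-1 <= nbr_count n c v 1 + nbr_count n c v 3 + uphalf n.-1]) ->
  (forall u v, u < n -> v < n -> u != v ->
     nbr_count n c u 3 + nbr_count n c v 1 != nbr_count n c v 3 + nbr_count n c u 1) ->
  has_qm_nsd_coloring (@Kn_adj n) 3.
Proof.
move=> c_sym c_range c_qm c_nsd; set cK := fun x y : 'I_n => c x y.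
have cK_col : is_k_edge_coloring (@Kn_adj n) 3 cK.
  by move=> u v _; have /andP[c_gt0 c_le3] := c_range u v; split; rewrite // /cK c_sym.
exists cK; split => // [v i | u v uv].
- change (color_count (@Kn_adj n) cK v i <= uphalf (deg (@Kn_adj n) v)).
  have [i_in | i_out] := boolP (0 < i <= 3); last by rewrite (color_count_eq0 _ cK_col).
  have := deg_3_coloring v cK_col; have [] := c_qm v (ltn_ord v).
  by rewrite !color_count_Kn deg_Kn; case: i i_in => [|[|[|[|i]]]] //=; lia.
- have := sigma_3_coloring u cK_col; have := sigma_3_coloring v cK_col.
  have := c_nsd u v (ltn_ord u) (ltn_ord v) uv.
  by rewrite !color_count_Kn !deg_Kn; lia.
Qed.

Definition odd_color m u v := if odd (u + v) then (if u + v < m.*2 then 1 else 3) else 2.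

Lemma odd_color_sym m u v : odd_color m u v = odd_color m v u.
Proof. by rewrite /odd_color addnC. Qed.

Lemma odd_color_count1 m v : v <= m.*2 -> nbr_count m.*2.+1 (odd_color m) v 1 = m - v./2.
Proof.
move=> vm; rewrite /nbr_count (eq_big_nat _ _ (F2 := fun u => (odd (u + v) && (u < m.*2 - v) : nat))).
  by rewrite (sum_nat_widen (fun u => odd (u + v))) ?sum_odd_addn; lia.
by move=> u _; rewrite /odd_color addnC; repeat (case: ifP => ?); lia.
Qed.

Lemma odd_color_count3 m v : v <= m.*2 -> nbr_count m.*2.+1 (odd_color m) v 3 = uphalf v.
Proof.
move=> vm; apply/eqP; rewrite -(eqn_add2l (m - v./2)) -{1}(odd_color_count1 vm).
rewrite /nbr_count -big_split /= (eq_big_nat _ _ (F2 := fun u => odd (u + v) : nat)).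
  by rewrite sum_odd_addn; lia.
by move=> u _; rewrite /odd_color addnC; repeat (case: ifP => ?); lia.
Qed.

Lemma Kn_odd_has_qm_nsd_3_coloring m : has_qm_nsd_coloring (@Kn_adj m.*2.+1) 3.
Proof.
apply: (@Kn_has_qm_nsd_3_coloring_from_counts _ (odd_color m)) => [u v | u v | v vm | u v um vm uv].
- exact: odd_color_sym.
- by rewrite /odd_color; repeat case: ifP.
- by rewrite odd_color_count1 ?odd_color_count3 //=; split; lia.
- by rewrite !odd_color_count1 ?odd_color_count3 //; lia.
Qed.

Definition hub_color m u := if u < m then 1 else if u < m + 2 then 2 else 3.

Definition even_color m u v :=
  if u == m.*2.+1 then hub_color m v
  else if v == m.*2.+1 then hub_color m u else odd_color m u v.

Lemma even_color_countE m v i : v <= m.*2 ->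
  nbr_count m.*2.+2 (even_color m) v i
  = nbr_count m.*2.+1 (odd_color m) v i + (hub_color m v == i).
Proof.
move=> vm; have v_hub : (v == m.*2.+1) = false by apply/eqP; lia.
have hub_v : m.*2.+1 != v by lia.
rewrite /nbr_count big_nat_recr //= /even_color v_hub eqxx hub_v.
by congr (_ + _); apply: eq_big_nat => u /andP[_ um]; rewrite ifN //; lia.
Qed.

Lemma even_color_count_hub m i :
  nbr_count m.*2.+2 (even_color m) m.*2.+1 i = \sum_(0 <= u < m.*2.+1) (hub_color m u == i).
Proof.
rewrite /nbr_count big_nat_recr //= eqxx addn0 /even_color eqxx.
by apply: eq_big_nat => u /andP[_ um]; rewrite (_ : u != m.*2.+1) //; lia.
Qed.

Lemma even_color_count1 m v : v < m.*2.+2 ->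
  nbr_count m.*2.+2 (even_color m) v 1
  = if v == m.*2.+1 then m else m - v./2 + (hub_color m v == 1).
Proof.
case: eqP => [-> _ | v_hub v_lt]; last by rewrite even_color_countE ?odd_color_count1 //; lia.
rewrite even_color_count_hub (eq_big_nat _ _ (F2 := fun u => (u < m : nat))).
  by rewrite sum_nat_ltn //; lia.
by move=> u _; rewrite /hub_color; repeat (case: ifP => ?); lia.
Qed.

Lemma even_color_count3 m v : 0 < m -> v < m.*2.+2 ->
  nbr_count m.*2.+2 (even_color m) v 3
  = if v == m.*2.+1 then m.-1 else uphalf v + (hub_color m v == 3).
Proof.
move=> m_gt0; case: eqP => [-> _ | v_hub v_lt].
  rewrite even_color_count_hub (eq_big_nat _ _ (F2 := fun u => (m + 2 <= u : nat))).
    by rewrite sum_nat_geq; lia.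
  by move=> u _; rewrite /hub_color; repeat (case: ifP => ?); lia.
by rewrite even_color_countE ?odd_color_count3 //; lia.
Qed.

Lemma Kn_even_has_qm_nsd_3_coloring m : 0 < m -> has_qm_nsd_coloring (@Kn_adj m.*2.+2) 3.
Proof.
move=> m_gt0.
apply: (@Kn_has_qm_nsd_3_coloring_from_counts _ (even_color m)) => [u v | u v | v vm | u v um vm uv].
- by rewrite /even_color odd_color_sym; do 2 case: eqP => //; move=> -> ->.
- by rewrite /even_color /hub_color /odd_color; repeat case: ifP.
- rewrite even_color_count1 ?even_color_count3 //= /hub_color.
  by repeat (case: ifP => ?); split; lia.
- rewrite !even_color_count1 ?even_color_count3 // /hub_color.
  by repeat (case: ifP => ?); lia.
Qed.

Theorem mainTheorem4 (n : nat) : 3 <= n -> chi_qm_sigma_eq (@Kn_adj n) 3.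
Proof.
move=> n_ge3; split; last by move=> j j_lt3; apply: Kn_no_qm_nsd_2_coloring.
case/boolP: (odd n) => n_odd.
- have -> : n = (n./2).*2.+1 by lia.
  exact: Kn_odd_has_qm_nsd_3_coloring.
- have -> : n = (n./2.-1).*2.+2 by lia.
  by apply: Kn_even_has_qm_nsd_3_coloring; lia.
Qed.
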